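(* Let $F$ be a field of characteristic not $2$, let $G=\mathrm{GL}_2\times\mathrm{GL}_2\times\mathrm{GL}_2$ act on $V=M_2\oplus M_2$ by $(x,y)\cdot\rho(g_1,g_2,g_3)=(g_1^{-1}xg_2,\,g_1^{-1}yg_2)g_3$. The following elements form a complete set of representatives of the singular $G(F)$-orbits in $V(F)$ (those $(x,y)$ with $P(x,y)=0$), with the stated stabilizers $G_x$ in $G$: (0) $x_0=(O_2,O_2)$, $G_{x_0}=G$; (1) $x_1=(O_2,E_{12})$, $G_{x_1}=\{(\left(\begin{smallmatrix}a&*\\0&*\end{smallmatrix}\right),\left(\begin{smallmatrix}*&*\\0&b\end{smallmatrix}\right),\left(\begin{smallmatrix}*&*\\0&c\end{smallmatrix}\right))\in G: a=bc\}$; (2) $x_2=(O_2,I_2)$, $G_{x_2}=\{(g,h,\left(\begin{smallmatrix}*&*\\0&c\end{smallmatrix}\right))\in G: g=ch\}$; (3) $x_3=(E_{11},E_{12})$, with $G_{x_3}\cong G_{x_2}$; (4) $x_4=(E_{12},E_{22})$, with $G_{x_4}\cong G_{x_2}$; (5) $x_5=(E_{12},I_2)$, $G_{x_5}=\{(\left(\begin{smallmatrix}a_1&a_2\\0&a_3\end{smallmatrix}\right),\left(\begin{smallmatrix}a_1&a_2\\0&a_3\end{smallmatrix}\right)\left(\begin{smallmatrix}1/c_3&-c_2/(c_1c_3)\\0&1/c_3\end{smallmatrix}\right),\left(\begin{smallmatrix}c_1&c_2\\0&c_3\end{smallmatrix}\right))\in G: a_1c_3=a_3c_1\}$.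
   Context: Here $(x,y)g_3$ for $g_3=\left(\begin{smallmatrix}a&b\\c&d\end{smallmatrix}\right)$ means $(ax+cy,\,bx+dy)$. $O_2$ is the zero matrix, $I_2$ the identity, $E_{ij}$ the matrix unit. For $y\in M_2$ let $y^\iota=\left(\begin{smallmatrix}0&1\\-1&0\end{smallmatrix}\right){}^t y\left(\begin{smallmatrix}0&-1\\1&0\end{smallmatrix}\right)$ (the adjugate), and $P(x,y)=-\det(xy^\iota-yx^\iota)$. *)

From HB Require Import structures.
From mathcomp Require Import all_boot all_order all_algebra.
Set Implicit Arguments. Unset Strict Implicit. Unset Printing Implicit Defensive.
Import GRing.Theory.
Local Open Scope ring_scope.

Section Defs.
Variable F : fieldType.

Definition V := ('M[F]_2 * 'M[F]_2)%type.
Definition G3 := ('M[F]_2 * 'M[F]_2 * 'M[F]_2)%type.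

Definition mx2 (a b c d : F) : 'M[F]_2 :=
  \matrix_(i < 2, j < 2)
    if (i == 0 :> nat) then (if (j == 0 :> nat) then a else b)
    else (if (j == 0 :> nat) then c else d).

Definition E11 : 'M[F]_2 := mx2 1 0 0 0.
Definition E12 : 'M[F]_2 := mx2 0 1 0 0.
Definition E22 : 'M[F]_2 := mx2 0 0 0 1.
Definition O2 : 'M[F]_2 := 0.
Definition I2 : 'M[F]_2 := 1%:M.

Definition inG (g : G3) : Prop :=
  [/\ g.1.1 \in unitmx, g.1.2 \in unitmx & g.2 \in unitmx].

Definition mulG (g h : G3) : G3 :=
  (g.1.1 *m h.1.1, g.1.2 *m h.1.2, g.2 *m h.2).

Definition ent (m : 'M[F]_2) (i j : nat) : F := m (inord i) (inord j).

(* (x,y).rho(g1,g2,g3) = (g1^-1 x g2, g1^-1 y g2) g3,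
   where (x,y) g3 = (a x + c y, b x + d y) for g3 = ((a b)(c d)) *)
Definition act (v : V) (g : G3) : V :=
  let x' := invmx g.1.1 *m v.1 *m g.1.2 in
  let y' := invmx g.1.1 *m v.2 *m g.1.2 in
  (ent g.2 0 0 *: x' + ent g.2 1 0 *: y', ent g.2 0 1 *: x' + ent g.2 1 1 *: y').

Definition iota (y : 'M[F]_2) : 'M[F]_2 :=
  mx2 0 1 (-1) 0 *m y^T *m mx2 0 (-1) 1 0.

Definition P (v : V) : F := - \det (v.1 *m iota v.2 - v.2 *m iota v.1).

Definition singular (v : V) : Prop := P v = 0.

Definition same_orbit (v w : V) : Prop := exists g, inG g /\ act v g = w.

Definition stab (v : V) (g : G3) : Prop := inG g /\ act v g = v.

Definition rep (i : 'I_6) : V :=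
  match val i with
  | 0 => (O2, O2)
  | 1 => (O2, E12)
  | 2 => (O2, I2)
  | 3 => (E11, E12)
  | 4 => (E12, E22)
  | _ => (E12, I2)
  end.

Definition stab1_set (g : G3) : Prop :=
  inG g /\ [/\ ent g.1.1 1 0 = 0, ent g.1.2 1 0 = 0, ent g.2 1 0 = 0 &
             ent g.1.1 0 0 = ent g.1.2 1 1 * ent g.2 1 1].

Definition stab2_set (g : G3) : Prop :=
  inG g /\ ent g.2 1 0 = 0 /\ g.1.1 = ent g.2 1 1 *: g.1.2.

Definition stab5_set (g : G3) : Prop :=
  inG g /\ exists a1 a2 a3 c1 c2 c3 : F,
    [/\ g.1.1 = mx2 a1 a2 0 a3,
        g.1.2 = mx2 a1 a2 0 a3 *m mx2 (1 / c3) (- c2 / (c1 * c3)) 0 (1 / c3),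
        g.2 = mx2 c1 c2 0 c3 &
        a1 * c3 = a3 * c1].

Definition subgroup_iso (S T : G3 -> Prop) : Prop :=
  exists f : G3 -> G3,
    [/\ forall g, S g -> T (f g),
        forall g h, S g -> S h -> f (mulG g h) = mulG (f g) (f h),
        forall g h, S g -> S h -> f g = f h -> g = h &
        forall k, T k -> exists2 g, S g & f g = k].

End Defs.

(* Singularity is governed by the binary quadratic form (s, t) |-> det (s x + t y):
   P (x, y) is its discriminant, hence a relative invariant of G.  If some member of
   the pencil of (x, y) is invertible, G moves it to I and (x, y) to (z, I); then
   P (z, I) = 0 says that z has a double eigenvalue, so (char F <> 2) z is a scalar
   plus 0 or a conjugate of E12, which gives x_2 or x_5.  Otherwise x, y and x + y are
   all singular, and the rank-one normal form of y brings (x, y) to x_0, x_1, x_3 or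
   x_4.  The six orbits are separated by four G-invariant properties of the pencil:
   being zero, being linearly dependent, consisting of singular matrices, and having
   a common kernel.  The stabilizers are computed entrywise, and G_{x_3}, G_{x_4} are
   identified with G_{x_2} by maps that essentially permute the three GL_2 factors. *)

From Pilot Require Import Defs.
From mathcomp Require Import all_boot all_order all_algebra ring.
Set Implicit Arguments. Unset Strict Implicit. Unset Printing Implicit Defensive.
Import GRing.Theory.
Local Open Scope ring_scope.

Lemma pchar2_natr_neq0 (R : nzSemiRingType) : 2 \notin [pchar R] -> 2%:R != 0 :> R.
Proof. by apply: contra => /eqP two0; rewrite inE two0 eqxx. Qed.

Lemma invmxM (R : comUnitRingType) n (A B : 'M[R]_n) :
  A \in unitmx -> B \in unitmx -> invmx (A *m B) = invmx B *m invmx A.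
Proof.
move=> uA uB; have uAB : A *m B \in unitmx by rewrite unitmx_mul uA uB.
rewrite -[RHS]mul1mx -(mulVmx uAB) -mulmxA.
by rewrite (mulmxA (A *m B)) mulmxK // mulmxV // mulmx1.
Qed.

Lemma mulf_neq0E (R : idomainType) (x y : R) : (x * y != 0) = (x != 0) && (y != 0).
Proof. by rewrite mulf_eq0 negb_or. Qed.

Lemma iff_bool_eq (b c : bool) : (b <-> c) -> b = c.
Proof. by case=> bc cb; apply/idP/idP. Qed.

Section Mx2.
Variable F : fieldType.
Implicit Types (a b c d : F) (x y : 'M[F]_2).

Lemma sum_ord2 (f : 'I_2 -> F) : \sum_(i < 2) f i = f 0 + f 1.
Proof. by rewrite big_ord_recl big_ord1; congr (_ + f _); apply: val_inj. Qed.

Lemma inord2_0 : inord 0 = 0 :> 'I_2. Proof. by apply: val_inj; rewrite /= inordK. Qed.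
Lemma inord2_1 : inord 1 = 1 :> 'I_2. Proof. by apply: val_inj; rewrite /= inordK. Qed.

Lemma mx2E x : x = mx2 (x 0 0) (x 0 1) (x 1 0) (x 1 1).
Proof.
apply/matrixP => i j; rewrite !mxE.
by case: i => [[|[|//]] ?]; case: j => [[|[|//]] ?]; congr (x _ _); apply: val_inj.
Qed.

Lemma mx2_ind (Q : 'M[F]_2 -> Prop) : (forall a b c d, Q (mx2 a b c d)) -> forall x, Q x.
Proof. by move=> Qmx2 x; rewrite (mx2E x). Qed.

Lemma mx2P a b c d a' b' c' d' :
  mx2 a b c d = mx2 a' b' c' d' <-> [/\ a = a', b = b', c = c' & d = d'].
Proof.
split=> [e | [-> -> -> ->] //].
have eij i j : mx2 a b c d i j = mx2 a' b' c' d' i j by rewrite e.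
by move: (eij 0 0) (eij 0 1) (eij 1 0) (eij 1 1); rewrite !mxE.
Qed.

Lemma mx2_eqE a b c d a' b' c' d' :
  (mx2 a b c d == mx2 a' b' c' d') = [&& a == a', b == b', c == c' & d == d'].
Proof.
by apply/eqP/and4P => [/mx2P[-> -> -> ->] | [/eqP-> /eqP-> /eqP-> /eqP->]]; rewrite ?eqxx.
Qed.

Lemma ent_mx2 a b c d :
  [/\ ent (mx2 a b c d) 0 0 = a, ent (mx2 a b c d) 0 1 = b,
      ent (mx2 a b c d) 1 0 = c & ent (mx2 a b c d) 1 1 = d].
Proof. by rewrite /ent inord2_0 inord2_1 !mxE. Qed.

Lemma mx2_0 : 0 = mx2 0 0 0 0 :> 'M[F]_2.
Proof. by rewrite [LHS]mx2E !mxE. Qed.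

Lemma mx2_1 : 1%:M = mx2 1 0 0 1 :> 'M[F]_2.
Proof. by rewrite [LHS]mx2E !mxE. Qed.

Lemma add_mx2 a b c d a' b' c' d' :
  mx2 a b c d + mx2 a' b' c' d' = mx2 (a + a') (b + b') (c + c') (d + d').
Proof. by rewrite [LHS]mx2E !mxE. Qed.

Lemma scale_mx2 k a b c d : k *: mx2 a b c d = mx2 (k * a) (k * b) (k * c) (k * d).
Proof. by rewrite [LHS]mx2E !mxE. Qed.

Lemma mul_mx2 a b c d a' b' c' d' :
  mx2 a b c d *m mx2 a' b' c' d' =
  mx2 (a * a' + b * c') (a * b' + b * d') (c * a' + d * c') (c * b' + d * d').
Proof. by rewrite [LHS]mx2E !mxE !sum_ord2 !mxE. Qed.

Lemma opp_mx2 a b c d : - mx2 a b c d = mx2 (- a) (- b) (- c) (- d).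
Proof. by rewrite [LHS]mx2E !mxE. Qed.

Lemma tr_mx2 a b c d : (mx2 a b c d)^T = mx2 a c b d.
Proof. by rewrite [LHS]mx2E !mxE. Qed.

Lemma det_mx2 a b c d : \det (mx2 a b c d) = a * d - b * c.
Proof.
rewrite (expand_det_row _ 0) sum_ord2 /cofactor !det_mx11 !mxE /=.
by rewrite expr0 expr1 mul1r mulN1r mulrN.
Qed.

Lemma unitmx_mx2 a b c d : (mx2 a b c d \in unitmx) = (a * d - b * c != 0).
Proof. by rewrite unitmxE det_mx2 unitfE. Qed.

Lemma det_ent x : \det x = ent x 0 0 * ent x 1 1 - ent x 0 1 * ent x 1 0.
Proof. by elim/mx2_ind: x => a b c d; case: (ent_mx2 a b c d) => -> -> -> ->; apply: det_mx2. Qed.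

Lemma det_pencil s t x y :
  \det (s *: x + t *: y) =
  s ^+ 2 * \det x + s * t * (\det (x + y) - \det x - \det y) + t ^+ 2 * \det y.
Proof.
elim/mx2_ind: x => a b c d; elim/mx2_ind: y => a' b' c' d'.
by rewrite !scale_mx2 !add_mx2 !det_mx2; ring.
Qed.

Lemma triu_unitmx_diag (A : 'M[F]_2) :
  ent A 1 0 = 0 -> A \in unitmx -> ent A 0 0 != 0 /\ ent A 1 1 != 0.
Proof. by move=> A10; rewrite unitmxE det_ent A10 mulr0 subr0 unitfE mulf_neq0E => /andP. Qed.

Lemma ent11_mulmx (A B : 'M[F]_2) :
  ent A 1 0 = 0 -> ent (A *m B) 1 1 = ent A 1 1 * ent B 1 1.
Proof. by rewrite /ent inord2_0 inord2_1 !mxE sum_ord2 => ->; rewrite mul0r add0r. Qed.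

End Mx2.

Ltac mx2_norm := rewrite /= /ent ?inord2_0 ?inord2_1 /O2 /I2 /E11 /E12 /E22 ?mx2_0 ?mx2_1
  ?(scale_mx2, opp_mx2, add_mx2, mul_mx2, tr_mx2) ?det_mx2 ?unitmx_mx2 ?mxE /=.

Ltac simpl01 := rewrite ?(mul0r, mulr0, mul1r, mulr1, subr0, sub0r, add0r, addr0, oppr0).

Ltac mx2_neq := rewrite ?mx2_eqE ?[0 == 1]eq_sym ?(eqxx, oner_eq0, andbF, andFb, andbT) //.

Section Action.
Variable F : fieldType.
Implicit Types (v w : V F) (g h : G3 F) (x y : 'M[F]_2).

Lemma act_mx v g :
  act v g = (invmx g.1.1 *m ((ent g.2 0 0 *: v.1 + ent g.2 1 0 *: v.2) *m g.1.2),
             invmx g.1.1 *m ((ent g.2 0 1 *: v.1 + ent g.2 1 1 *: v.2) *m g.1.2)).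
Proof. by congr pair; rewrite mulmxDl mulmxDr -!scalemxAl -!scalemxAr !mulmxA. Qed.

Lemma actP v w g : g.1.1 \in unitmx ->
  act v g = w <->
  (ent g.2 0 0 *: v.1 + ent g.2 1 0 *: v.2) *m g.1.2 = g.1.1 *m w.1 /\
  (ent g.2 0 1 *: v.1 + ent g.2 1 1 *: v.2) *m g.1.2 = g.1.1 *m w.2.
Proof.
move=> ug1; rewrite act_mx; case: w => w1 w2 /=; split.
  by case=> <- <-; rewrite !mulKVmx.
by case=> -> ->; rewrite !mulKmx.
Qed.

Lemma act1 v : act v (1%:M, 1%:M, 1%:M) = v.
Proof.
rewrite /act /= invmx1 !mul1mx !mulmx1 mx2_1.
case: (ent_mx2 (1 : F) 0 0 1) => -> -> -> ->.
by rewrite !scale1r !scale0r addr0 add0r -surjective_pairing.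
Qed.

Lemma actM v g h : g.1.1 \in unitmx -> h.1.1 \in unitmx ->
  act (act v g) h = act v (mulG g h).
Proof.
move=> ug uh; rewrite !act_mx /mulG /= invmxM // /ent !inord2_0 !inord2_1.
by congr pair; apply/matrixP => i j; rewrite !(mxE, sum_ord2); ring.
Qed.

Lemma inG1 : inG ((1%:M, 1%:M, 1%:M) : G3 F).
Proof. by split; apply: unitmx1. Qed.

Lemma inGM g h : inG g -> inG h -> inG (mulG g h).
Proof. by case=> ? ? ?; case=> ? ? ?; split; rewrite unitmx_mul; apply/andP. Qed.

Lemma same_orbit_refl v : same_orbit v v.
Proof. by exists (1%:M, 1%:M, 1%:M); split; [apply: inG1 | apply: act1]. Qed.

Lemma same_orbit_sym v w : same_orbit v w -> same_orbit w v.
Proof.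
case=> g [[ug1 ug2 ug3] <-]; exists (invmx g.1.1, invmx g.1.2, invmx g.2).
split; first by split; rewrite unitmx_inv.
by rewrite actM ?unitmx_inv // /mulG /= !mulmxV // act1.
Qed.

Lemma same_orbit_trans u v w : same_orbit u v -> same_orbit v w -> same_orbit u w.
Proof.
case=> g [Gg <-] [h [Gh <-]]; exists (mulG g h); split; first exact: inGM.
by rewrite actM //; [case: Gg | case: Gh].
Qed.

Lemma same_orbit_mx2 v w (A B : 'M[F]_2) a b c d :
  A \in unitmx -> B \in unitmx -> a * d - b * c != 0 ->
  (a *: v.1 + c *: v.2) *m B = A *m w.1 ->
  (b *: v.1 + d *: v.2) *m B = A *m w.2 ->
  same_orbit v w.
Proof.
move=> uA uB ug3 e1 e2; exists (A, B, mx2 a b c d).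
split; first by split; rewrite // unitmx_mx2.
by apply/actP => //=; case: (ent_mx2 a b c d) => -> -> -> ->.
Qed.

Lemma same_orbit_swap x y : same_orbit (x, y) (y, x).
Proof.
apply: (@same_orbit_mx2 _ _ 1%:M 1%:M 0 1 1 0); rewrite ?unitmx1 //=.
- by rewrite mul0r mulr1 sub0r oppr_eq0 oner_eq0.
- by rewrite scale0r scale1r add0r mulmx1 mul1mx.
- by rewrite scale0r scale1r addr0 mulmx1 mul1mx.
Qed.

Lemma same_orbit_shear x y : same_orbit (x, y) (x, x + y).
Proof.
apply: (@same_orbit_mx2 _ _ 1%:M 1%:M 1 1 0 1); rewrite ?unitmx1 //=.
- by rewrite mulr1 mulr0 subr0 oner_eq0.
- by rewrite scale0r scale1r addr0 mulmx1 mul1mx.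
- by rewrite !scale1r mulmx1 mul1mx.
Qed.

Lemma same_orbit_mulmx x y (A B : 'M[F]_2) : A \in unitmx -> B \in unitmx ->
  same_orbit (x, y) (invmx A *m x *m B, invmx A *m y *m B).
Proof.
move=> uA uB; apply: (@same_orbit_mx2 _ _ A B 1 0 0 1) => //=.
- by rewrite mulr1 mulr0 subr0 oner_eq0.
- by rewrite scale0r scale1r addr0 -mulmxA mulKVmx.
- by rewrite scale0r scale1r add0r -mulmxA mulKVmx.
Qed.

End Action.

Section RelativeInvariant.
Variable F : fieldType.
Implicit Types (x y : 'M[F]_2) (v w : V F) (g : G3 F).

Lemma P_det x y :
  P (x, y) = (\det (x + y) - \det x - \det y) ^+ 2 - 4 * \det x * \det y.
Proof.
elim/mx2_ind: x => a b c d; elim/mx2_ind: y => a' b' c' d'.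
by rewrite /P /Defs.iota; mx2_norm; ring.
Qed.

Lemma P_mulmx x y (A B : 'M[F]_2) :
  P (A *m x *m B, A *m y *m B) = (\det A * \det B) ^+ 2 * P (x, y).
Proof. by rewrite !P_det -mulmxDl -mulmxDr !det_mulmx; ring. Qed.

Lemma P_pencil a b c d x y :
  P (a *: x + c *: y, b *: x + d *: y) = (a * d - b * c) ^+ 2 * P (x, y).
Proof. by rewrite !P_det addrACA -!scalerDl !det_pencil; ring. Qed.

Lemma P_act v g : P (act v g) = (\det (invmx g.1.1) * \det g.1.2 * \det g.2) ^+ 2 * P v.
Proof. by case: v => x y; rewrite /act P_pencil P_mulmx (det_ent g.2); ring. Qed.

Lemma singular_orbit v w : same_orbit v w -> singular v -> singular w.
Proof. by case=> g [_ <-]; rewrite /singular P_act => ->; rewrite mulr0. Qed.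

End RelativeInvariant.

Tactic Notation "orbit_by" uconstr(A) uconstr(B) uconstr(a) uconstr(b) uconstr(c) uconstr(d) :=
  refine (@same_orbit_mx2 _ _ _ A B a b c d _ _ _ _ _); mx2_norm;
  try (apply/mx2P; split; field; repeat (apply/andP; split));
  simpl01; rewrite ?(oppr_eq0, oner_eq0, invr_eq0) //.

Section Classification.
Variable F : fieldType.
Implicit Types (x y z : 'M[F]_2) (v w : V F).

Definition classified v := exists i, same_orbit v (rep F i).

Lemma rep_singular (i : 'I_6) : singular (rep F i).
Proof.
by rewrite /singular; case: i => [[|[|[|[|[|[|//]]]]]] ?]; rewrite P_det; mx2_norm; ring.
Qed.

Lemma classified_orbit v w : same_orbit v w -> classified w -> classified v.
Proof. by move=> vw [i wi]; exists i; apply: same_orbit_trans wi. Qed.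

Lemma classify_pencil_I (hF : 2 \notin [pchar F]) z :
  singular (z, I2 F) -> classified (z, I2 F).
Proof.
have two_neq0 : (2 : F) != 0 := pchar2_natr_neq0 hF.
elim/mx2_ind: z => p q r s; rewrite /singular P_det; mx2_norm => disc0.
have {}disc0 : (p - s) ^+ 2 + 4 * q * r = 0 by rewrite -disc0; ring.
have [q0|q_neq0] := eqVneq q 0.
  have /eqP : (p - s) ^+ 2 = 0 by rewrite -disc0 q0; ring.
  rewrite sqrf_eq0 subr_eq0 q0 => /eqP ->.
  have [r0|r_neq0] := eqVneq r 0.
    exists (@Ordinal 6 2 isT); rewrite r0.
    orbit_by 1%:M 1%:M 1 0 (- s) 1.
  exists (@Ordinal 6 5 isT).
  orbit_by (mx2 0 1 r 0) (mx2 0 1 r 0) 1 0 (- s) 1.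
have four_neq0 : (4 : F) != 0.
  by rewrite [4](_ : _ = 2 * 2 :> F) ?mulf_neq0 //; ring.
have -> : r = - (p - s) ^+ 2 / (4 * q).
  apply: (mulIf (mulf_neq0 four_neq0 q_neq0)).
  by rewrite mulfVK ?mulf_neq0 // -[RHS]addr0 -disc0; ring.
(* With h = (p - s) / 2, z - ((p + s) / 2) I = [[h, q], [r, -h]] squares to 0, and the
   columns (q, -h), (0, 1) of the conjugating matrix form a Jordan basis for it. *)
exists (@Ordinal 6 5 isT).
orbit_by (mx2 q 0 (- ((p - s) / 2)) 1) (mx2 q 0 (- ((p - s) / 2)) 1) 1 0 (- ((p + s) / 2)) 1.
Qed.

Lemma classify_unit (hF : 2 \notin [pchar F]) x y :
  y \in unitmx -> singular (x, y) -> classified (x, y).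
Proof.
move=> uy sing; have xy_I : same_orbit (x, y) (invmx y *m x, I2 F).
  by have := same_orbit_mulmx x y uy (unitmx1 F 2); rewrite !mulmx1 mulVmx.
apply: (classified_orbit xy_I (classify_pencil_I hF _)).
exact: singular_orbit xy_I sing.
Qed.

Lemma pid_mx1_2 : pid_mx 1 = mx2 1 0 0 0 :> 'M[F]_2.
Proof. by rewrite [LHS]mx2E !mxE. Qed.

Lemma rank1_mx2 y : y != 0 -> \det y = 0 ->
  exists A B, [/\ A \in unitmx, B \in unitmx & y *m B = A *m E12 F].
Proof.
move=> y_neq0 dety0; have rank_y : \rank y = 1%N.
  have : ~~ row_free y by rewrite row_free_unit unitmxE unitfE dety0 eqxx.
  rewrite /row_free => not_free; apply/eqP.
  by rewrite eqn_leq -ltnS ltn_neqAle rank_leq_row not_free lt0n mxrank_eq0 y_neq0.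
exists (col_ebase y), (invmx (row_ebase y) *m mx2 0 1 1 0); split.
- exact: col_ebase_unit.
- by rewrite unitmx_mul unitmx_inv row_ebase_unit unitmx_mx2 mul0r mulr1 sub0r oppr_eq0 oner_eq0.
rewrite -{1}(mulmx_ebase y) rank_y mulmxA mulmxK ?row_ebase_unit // -mulmxA pid_mx1_2.
by congr (_ *m _); mx2_norm; apply/mx2P; split; ring.
Qed.

Lemma classify_E12 x : \det x = 0 -> \det (x + E12 F) = 0 -> classified (x, E12 F).
Proof.
elim/mx2_ind: x => p q r s; mx2_norm => detx0 detxE0.
have : r = (p * s - q * r) - (p * s - (q + 1) * r) by ring.
rewrite !addr0 in detxE0; rewrite detx0 detxE0 subrr => r0.
rewrite r0 in detx0 *.
have [p0|p_neq0] := eqVneq p 0.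
  rewrite p0; have [s0|s_neq0] := eqVneq s 0.
    by exists (@Ordinal 6 1 isT); rewrite s0; orbit_by 1%:M 1%:M 1 0 (- q) 1.
  by exists (@Ordinal 6 4 isT); orbit_by 1%:M 1%:M 0 s^-1 1 (- q / s).
have -> : s = 0 by apply: (mulfI p_neq0); rewrite mulr0 -detx0; ring.
by exists (@Ordinal 6 3 isT); orbit_by 1%:M 1%:M p^-1 0 (- q / p) 1.
Qed.

Lemma classify_degenerate x y :
  \det x = 0 -> \det y = 0 -> \det (x + y) = 0 -> classified (x, y).
Proof.
wlog y_neq0 : x y / y != 0.
  move=> gen dx dy dxy; have [y0|y_neq0] := eqVneq y 0; last exact: gen.
  have [x0|x_neq0] := eqVneq x 0.
    by exists (@Ordinal 6 0 isT); rewrite x0 y0; apply: same_orbit_refl.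
  apply: (classified_orbit (same_orbit_swap x y)).
  by apply: gen; rewrite // addrC.
move=> dx dy dxy; have [A [B [uA uB yB]]] := rank1_mx2 y_neq0 dy.
have yE12 : invmx A *m y *m B = E12 F by rewrite -mulmxA yB mulKmx.
apply: (classified_orbit (same_orbit_mulmx x y uA uB)); rewrite yE12.
apply: classify_E12; first by rewrite !det_mulmx dx mulr0 mul0r.
by rewrite -yE12 -mulmxDl -mulmxDr !det_mulmx dxy mulr0 mul0r.
Qed.

Lemma classify (hF : 2 \notin [pchar F]) v : singular v -> classified v.
Proof.
case: v => x y sing; have [uy|nuy] := boolP (y \in unitmx); first exact: classify_unit.
have [ux|nux] := boolP (x \in unitmx).
  apply: (classified_orbit (same_orbit_swap x y) (classify_unit hF ux _)).
  exact: singular_orbit (same_orbit_swap x y) sing.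
have [uxy|nuxy] := boolP (x + y \in unitmx).
  apply: (classified_orbit (same_orbit_shear x y) (classify_unit hF uxy _)).
  exact: singular_orbit (same_orbit_shear x y) sing.
move: nux nuy nuxy; rewrite !unitmxE !unitfE !negbK => /eqP dx /eqP dy /eqP dxy.
exact: classify_degenerate.
Qed.

End Classification.

Section OrbitInvariants.
Variable F : fieldType.
Implicit Types (v w : V F) (g : G3 F).

Definition orbit_invariant (Q : V F -> Prop) := forall v g, inG g -> Q v -> Q (act v g).

Lemma orbit_invariant_iff Q v w : orbit_invariant Q -> same_orbit v w -> Q v <-> Q w.
Proof.
move=> invQ vw; split; first by case: vw => g [Gg <-]; apply: invQ.
by case: (same_orbit_sym vw) => g [Gg <-]; apply: invQ.
Qed.

Definition zero_pair v := v.1 = 0 /\ v.2 = 0.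

Definition pencil_dependent v :=
  exists s t : F, ((s != 0) || (t != 0)) /\ s *: v.1 + t *: v.2 = 0.

Definition pencil_singular v := forall s t : F, \det (s *: v.1 + t *: v.2) = 0.

Definition common_kernel v :=
  exists u : 'M[F]_2, [/\ u != 0, v.1 *m u = 0 & v.2 *m u = 0].

Lemma act_pencil v g s t :
  s *: (act v g).1 + t *: (act v g).2 =
  invmx g.1.1 *m (((s * ent g.2 0 0 + t * ent g.2 0 1) *: v.1 +
                   (s * ent g.2 1 0 + t * ent g.2 1 1) *: v.2) *m g.1.2).
Proof. by rewrite act_mx; apply/matrixP => i j; rewrite !(mxE, sum_ord2); ring. Qed.

Lemma zero_pair_invariant : orbit_invariant zero_pair.
Proof. by move=> [x y] g _ [/= -> ->]; rewrite act_mx /= !scaler0 addr0 mul0mx mulmx0. Qed.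

Lemma pencil_singular_invariant : orbit_invariant pencil_singular.
Proof. by move=> v g _ sing s t; rewrite act_pencil !det_mulmx sing mul0r mulr0. Qed.

Lemma common_kernel_invariant : orbit_invariant common_kernel.
Proof.
move=> v g [_ ug2 _] [u [u_neq0 xu yu]]; exists (invmx g.1.2 *m u); split.
- by apply: contra u_neq0 => /eqP u'0; rewrite -(mulKVmx ug2 u) u'0 mulmx0.
- by rewrite act_mx /= -!mulmxA mulKVmx // mulmxDl -!scalemxAl xu yu !scaler0 addr0 mulmx0.
- by rewrite act_mx /= -!mulmxA mulKVmx // mulmxDl -!scalemxAl xu yu !scaler0 addr0 mulmx0.
Qed.

Lemma pencil_dependent_invariant : orbit_invariant pencil_dependent.
Proof.
move=> v g [_ _ ug3] [s [t [st_neq0 st0]]].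
set a := ent g.2 0 0; set b := ent g.2 0 1; set c := ent g.2 1 0; set d := ent g.2 1 1.
have det_neq0 : a * d - b * c != 0 by rewrite -det_ent -unitfE -unitmxE.
exists (d * s - b * t), (a * t - c * s); split.
  apply: contraTT st_neq0; rewrite !negb_or !negbK => /andP[/eqP s'0 /eqP t'0].
  have sD : s * (a * d - b * c) = a * (d * s - b * t) + b * (a * t - c * s) by ring.
  have tD : t * (a * d - b * c) = c * (d * s - b * t) + d * (a * t - c * s) by ring.
  move: sD tD; rewrite s'0 t'0 !mulr0 addr0 => /eqP + /eqP.
  by rewrite !mulf_eq0 (negbTE det_neq0) !orbF => -> ->.
rewrite act_pencil -/a -/b -/c -/d.
have -> : (d * s - b * t) * a + (a * t - c * s) * b = (a * d - b * c) * s by ring.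
have -> : (d * s - b * t) * c + (a * t - c * s) * d = (a * d - b * c) * t by ring.
by rewrite -!scalerA -scalerDr st0 scaler0 mul0mx mulmx0.
Qed.

Lemma zero_pair_rep (i : 'I_6) : zero_pair (rep F i) <-> (val i == 0)%N.
Proof.
rewrite /zero_pair; case: i => [[|[|[|[|[|[|//]]]]]] ?]; split=> //=; mx2_norm;
  by case=> /eqP + /eqP; mx2_neq.
Qed.

Lemma pencil_dependent_rep (i : 'I_6) : pencil_dependent (rep F i) <-> (val i <= 2)%N.
Proof.
rewrite /pencil_dependent; case: i => [[|[|[|[|[|[|//]]]]]] ?]; split=> //=;
  try by exists 1, 0; rewrite oner_neq0 /O2 scaler0 scale0r addr0.
all: case=> s [t [st_neq0]]; mx2_norm; simpl01; case/mx2P=> e1 e2 e3 e4.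
all: by move: st_neq0; rewrite ?e1 ?e2 ?e3 ?e4 eqxx.
Qed.

Lemma pencil_singular_rep (i : 'I_6) :
  pencil_singular (rep F i) <-> val i \in [:: 0; 1; 3; 4]%N.
Proof.
rewrite /pencil_singular; case: i => [[|[|[|[|[|[|//]]]]]] ?]; split=> //=;
  try by move=> _ s t; mx2_norm; ring.
all: by move/(_ 0 1); mx2_norm; simpl01; move/eqP; rewrite oner_eq0.
Qed.

Lemma common_kernel_rep (i : 'I_6) :
  common_kernel (rep F i) <-> val i \in [:: 0; 1; 4]%N.
Proof.
rewrite /common_kernel; case: i => [[|[|[|[|[|[|//]]]]]] ?]; split=> //=;
  try by exists (E11 F); mx2_norm; split; mx2_neq; apply/mx2P; split; ring.
all: case=> u []; elim/mx2_ind: u => u1 u2 u3 u4; mx2_norm; simpl01.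
all: move=> u_neq0 /mx2P[e1 e2 e3 e4] /mx2P[f1 f2 f3 f4]; move: u_neq0.
all: by rewrite ?e1 ?e2 ?e3 ?e4 ?f1 ?f2 ?f3 ?f4 eqxx.
Qed.

Lemma rep_invariant_eq Q (b : 'I_6 -> bool) i j :
  orbit_invariant Q -> (forall k, Q (rep F k) <-> b k) ->
  same_orbit (rep F i) (rep F j) -> b i = b j.
Proof. by move=> invQ Qb ij; apply: iff_bool_eq; rewrite -!Qb; apply: orbit_invariant_iff ij. Qed.

Lemma rep_inj (i j : 'I_6) : same_orbit (rep F i) (rep F j) -> i = j.
Proof.
move=> ij.
have := rep_invariant_eq zero_pair_invariant zero_pair_rep ij.
have := rep_invariant_eq pencil_dependent_invariant pencil_dependent_rep ij.
have := rep_invariant_eq pencil_singular_invariant pencil_singular_rep ij.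
have := rep_invariant_eq common_kernel_invariant common_kernel_rep ij.
clear ij.
by case: i j => [[|[|[|[|[|[|//]]]]]] ?] [[|[|[|[|[|[|//]]]]]] ?] //= *; apply: val_inj.
Qed.

End OrbitInvariants.

Section Stabilizers.
Variable F : fieldType.
Implicit Types (v : V F) (g : G3 F).

Lemma rep_inord k (hk : (k < 6)%N) : rep F (inord k) = rep F (Ordinal hk).
Proof. by congr rep; apply: val_inj; rewrite /= inordK. Qed.

Lemma stabP v g :
  stab v g <->
  inG g /\ (ent g.2 0 0 *: v.1 + ent g.2 1 0 *: v.2) *m g.1.2 = g.1.1 *m v.1 /\
           (ent g.2 0 1 *: v.1 + ent g.2 1 1 *: v.2) *m g.1.2 = g.1.1 *m v.2.
Proof.
by rewrite /stab; split=> -[Gg]; case: (Gg) => ug1 _ _; rewrite actP.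
Qed.

Lemma stab_rep0 g : stab (rep F (inord 0)) g <-> inG g.
Proof.
rewrite (rep_inord (isT : (0 < 6)%N)) stabP /= /O2.
by rewrite !scaler0 addr0 mul0mx mulmx0; split=> [[] | ].
Qed.

Lemma stab_rep2 g : stab (rep F (inord 2)) g <-> stab2_set g.
Proof.
rewrite (rep_inord (isT : (2 < 6)%N)) stabP /stab2_set /= /O2 /I2.
rewrite !scaler0 !add0r mulmx0 mulmx1 -!scalemxAl !mul1mx.
split=> [[Gg [cg2 dg2]] | [Gg [-> ->]]]; last by rewrite scale0r.
do 2 split=> //; apply/eqP; move/eqP: cg2.
have g2_neq0 : g.1.2 != 0.
  by case: Gg => _ ug2 _; apply: contraTneq ug2 => ->; rewrite unitmxE det0 unitr0.
by rewrite scaler_eq0 (negbTE g2_neq0) orbF.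
Qed.

Lemma stab_rep1 g : stab (rep F (inord 1)) g <-> stab1_set g.
Proof.
rewrite (rep_inord (isT : (1 < 6)%N)) stabP /stab1_set /inG.
case: g => [[g1 g2] g3] /=; elim/mx2_ind: g1 => a1 a2 a3 a4.
elim/mx2_ind: g2 => b1 b2 b3 b4; elim/mx2_ind: g3 => c1 c2 c3 c4; mx2_norm; simpl01.
split=> [[units [e f]] | [units [a30 b30 c30 a1E]]]; last first.
  by subst; split=> //; split; apply/mx2P; split; ring.
case/mx2P: e => e1 e2 _ _; case/mx2P: f => f1 f2 _ a30; split=> //.
case: (units); rewrite -a30 mulr0 subr0 -f2 !mulf_neq0E => /andP[/andP[c4_neq0 b4_neq0] _] _ _.
split=> //.
- by apply: (mulfI c4_neq0); rewrite f1 mulr0.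
- by apply: (mulIf b4_neq0); rewrite e2 mul0r.
- by rewrite mulrC.
Qed.

Lemma stab_rep3 g : stab (rep F (inord 3)) g <->
  inG g /\ ent g.1.1 1 0 = 0 /\ g.2^T *m g.1.2 = ent g.1.1 0 0 *: 1%:M.
Proof.
rewrite (rep_inord (isT : (3 < 6)%N)) stabP /inG.
case: g => [[g1 g2] g3] /=; elim/mx2_ind: g1 => a1 a2 a3 a4.
elim/mx2_ind: g2 => b1 b2 b3 b4; elim/mx2_ind: g3 => c1 c2 c3 c4; mx2_norm; simpl01.
split=> [[units [/mx2P[e1 e2 a30 _] /mx2P[f1 f2 _ _]]] | [units [a30 /mx2P[e1 e2 f1 f2]]]].
  by split=> //; split; [apply/esym | apply/mx2P].
by split=> //; split; apply/mx2P; split; rewrite ?a30.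
Qed.

Lemma stab_rep4 g : stab (rep F (inord 4)) g <->
  inG g /\ ent g.1.2 1 0 = 0 /\ g.1.1 = ent g.1.2 1 1 *: g.2.
Proof.
rewrite (rep_inord (isT : (4 < 6)%N)) stabP /inG.
case: g => [[g1 g2] g3] /=; elim/mx2_ind: g1 => a1 a2 a3 a4.
elim/mx2_ind: g2 => b1 b2 b3 b4; elim/mx2_ind: g3 => c1 c2 c3 c4; mx2_norm; simpl01.
split=> [[units [/mx2P[e1 e2 e3 e4] /mx2P[f1 f2 f3 f4]]] | [units [b30 /mx2P[a1E a2E a3E a4E]]]].
  split=> //; split; last by apply/mx2P; split; rewrite mulrC.
  have : b3 * (c1 * c4 - c2 * c3) = c1 * b3 * c4 - c2 * b3 * c3 by ring.
  case: units => _ _ det3; rewrite e1 f1 !mul0r subr0 => /eqP.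
  by rewrite mulf_eq0 (negbTE det3) orbF => /eqP.
by subst; split=> //; split; apply/mx2P; split; ring.
Qed.

Lemma stab_rep5 g : stab (rep F (inord 5)) g <-> stab5_set g.
Proof.
rewrite (rep_inord (isT : (5 < 6)%N)) stabP /stab5_set /inG.
case: g => [[g1 g2] g3] /=; elim/mx2_ind: g1 => a1 a2 a3 a4.
elim/mx2_ind: g2 => b1 b2 b3 b4; elim/mx2_ind: g3 => c1 c2 c3 c4; mx2_norm; simpl01.
split=> [[units [/mx2P[e1 e2 e3 e4] /mx2P[f1 f2 f3 f4]]] | [units [a [a' [a'' [c [c' [c'' ]]]]]]]].
  split=> //; case: (units) => _ det2 det3.
  have c30 : c3 = 0.
    apply: contraTeq det2 => c3_neq0; rewrite negbK.
    have b30 : b3 = 0 by apply: (mulfI c3_neq0); rewrite e3 mulr0.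
    have b10 : b1 = 0 by apply: (mulfI c3_neq0); rewrite mulr0 -e1 b30 mulr0 addr0.
    by rewrite b10 b30 !mul0r mulr0 subrr.
  move: det3 e1 e2 e4; rewrite c30 mulr0 subr0 mulf_neq0E !mul0r !add0r.
  case/andP=> c1_neq0 c4_neq0 c1b3 a1E a3E.
  have b30 : b3 = 0 by apply: (mulfI c1_neq0); rewrite c1b3 mulr0.
  have b1E : b1 = c1 * b4 / c4 by rewrite a1E -f1 b30 mulr0 addr0; field.
  exists a1, a2, a4, c1, c2, c4; split.
  - by rewrite -a3E.
  - by rewrite -a1E -f2 -f4 b30 b1E mul_mx2; apply/mx2P; split; field; repeat (apply/andP; split).
  - by [].
  - by rewrite -a1E -f4; ring.
case=> /mx2P[a1E a2E a3E a4E]; rewrite mul_mx2 => /mx2P[b1E b2E b3E b4E].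
case/mx2P=> c1E c2E c3E c4E ac; subst; split=> //.
case: units => _ _; rewrite mulr0 subr0 mulf_neq0E => /andP[c_neq0 c''_neq0].
have -> : a = a'' * c / c'' by rewrite -ac; field.
by split; apply/mx2P; split; field; repeat (apply/andP; split).
Qed.

Lemma stab_rep4_iso : subgroup_iso (stab (rep F (inord 4))) (stab (rep F (inord 2))).
Proof.
exists (fun g => (g.1.1, g.2, g.1.2)); split.
- by move=> [[g1 g2] g3] /stab_rep4[[ug1 ug2 ug3] /= [b30 g1E]]; apply/stab_rep2.
- by [].
- by move=> [[g1 g2] g3] [[h1 h2] h3] _ _ [-> -> ->].
- move=> [[k1 k2] k3] /stab_rep2[[uk1 uk2 uk3] /= [c30 k1E]].
  by exists (k1, k3, k2); first apply/stab_rep4.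
Qed.

Lemma stab_rep3_iso : subgroup_iso (stab (rep F (inord 3))) (stab (rep F (inord 2))).
Proof.
exists (fun g => (ent g.1.1 1 1 *: g.2, g.2, g.1.1)); split.
- move=> [[g1 g2] g3] /stab_rep3[[ug1 ug2 ug3] /= [a30 _]]; apply/stab_rep2.
  split=> //=; split=> //; rewrite unitmxZ // unitfE.
  by case: (triu_unitmx_diag a30 ug1).
- move=> [[g1 g2] g3] [[h1 h2] h3] /stab_rep3[_ /= [a30 _]] _.
  by rewrite /mulG /= ent11_mulmx // -scalemxAl -scalemxAr scalerA.
- move=> [[g1 g2] g3] [[h1 h2] h3] /stab_rep3[[_ _ ug3] /= [_ g32]] /stab_rep3[_ /= [_ h32]].
  case=> _ g3E g1E; subst h3 h1; have ug3T : g3^T \in unitmx by rewrite unitmx_tr.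
  by rewrite -(mulKmx ug3T g2) -(mulKmx ug3T h2) g32 h32.
- move=> [[k1 k2] k3] /stab_rep2[[uk1 uk2 uk3] /= [c30 k1E]].
  have [c1_neq0 _] := triu_unitmx_diag c30 uk3.
  exists (k3, ent k3 0 0 *: invmx k2^T, k2); last by rewrite /= k1E.
  apply/stab_rep3 => /=; split; last split=> //.
    by split=> //; rewrite unitmxZ ?unitfE // unitmx_inv unitmx_tr.
  by rewrite -scalemxAr mulmxV // unitmx_tr.
Qed.

End Stabilizers.

Theorem proposition2p1 (F : fieldType) (hF : ~~ (2%N \in [pchar F])) :
  (* the x_i are singular representatives, one for each singular orbit *)
  (forall i : 'I_6, singular (rep F i)) /\
  (forall v : V F, singular v -> exists i : 'I_6, same_orbit v (rep F i)) /\
  (forall i j : 'I_6, same_orbit (rep F i) (rep F j) -> i = j) /\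
  (* stabilizers *)
  (forall g, stab (rep F (inord 0)) g <-> inG g) /\
  (forall g, stab (rep F (inord 1)) g <-> stab1_set g) /\
  (forall g, stab (rep F (inord 2)) g <-> stab2_set g) /\
  subgroup_iso (stab (rep F (inord 3))) (stab (rep F (inord 2))) /\
  subgroup_iso (stab (rep F (inord 4))) (stab (rep F (inord 2))) /\
  (forall g, stab (rep F (inord 5)) g <-> stab5_set g).
Proof.
split; first exact: rep_singular.
split; first exact: classify.
split; first exact: rep_inj.
split; first exact: stab_rep0.
split; first exact: stab_rep1.
split; first exact: stab_rep2.
split; first exact: stab_rep3_iso.
split; first exact: stab_rep4_iso.
exact: stab_rep5.
Qed.
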